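(* For every integer $n\ge2$, \[ \log g(n)\le \theta\big(P^{+}(g(n))\big)+S(q), \] where $q$ is the prime following $P^{+}(g(n))$ and $S(q)=\sum_{2\le\alpha\le \log(2q)/\log2}\theta(q^{1/\alpha}+1)$ (sum over integers $\alpha$).
   Context: $g(n)$ is the maximal order of an element of $\mathfrak S_n$, i.e. $g(n)=\max\{M\ge1:\ell(M)\le n\}$ with $\ell$ additive, $\ell(1)=0$, $\ell(p^a)=p^a$; $P^{+}(M)$ is the largest prime factor of $M$. $\theta(x)=\sum_{p\le x}\log p$. *)

From Stdlib Require Import Reals.
From mathcomp Require Import all_boot.
Set Implicit Arguments. Unset Strict Implicit. Unset Printing Implicit Defensive.

Definition ell (M : nat) : nat := \sum_(p <- primes M) p ^ logn p M.

Definition is_g (n M : nat) : Prop :=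
  (1 <= M)%N /\ (ell M <= n)%N /\
  forall M' : nat, (1 <= M')%N -> (ell M' <= n)%N -> (M' <= M)%N.

Definition Pmaxf (M : nat) : nat := max_pdiv M.

Definition next_prime (p q : nat) : Prop :=
  prime q /\ (p < q)%N /\ forall r : nat, (p < r)%N -> (r < q)%N -> ~~ prime r.

(* For integers k >= 0 and real x: (k <= x) <-> (k < up x).  *)
Definition theta (x : R) : R :=
  \big[Rplus/R0]_(0 <= p < Z.to_nat (up x) | prime p) ln (INR p).

Definition Ssum (q : nat) : R :=
  \big[Rplus/R0]_(2 <= a < Z.to_nat (up (Rdiv (ln (Rmult 2 (INR q))) (ln 2))))
     theta (Rplus (Rpower (INR q) (Rinv (INR a))) 1).

(* Write M = prod_r r^(k_r).  If k_r >= 2 and q is a prime above every prime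
   factor of M, then r^(k_r - 1) (r - 1) < q: otherwise trading the factor r
   for q (M -> M q / r) would give a larger integer with no larger ell, against
   the maximality of M = g(n).  Hence 2^(k_r) <= 2q and (r - 1)^a <= q for
   2 <= a <= k_r.  Counting ln M = sum_r k_r ln r layer by layer,
   ln M = sum_r ln r + sum_(a >= 2) sum_(k_r >= a) ln r, the first layer is at
   most theta(P^+(M)) and layer a at most theta(q^(1/a) + 1). *)

From HB Require Import structures.
From Stdlib Require Import Reals Lia Lra.
From mathcomp Require Import all_boot zify.

Set Implicit Arguments.
Unset Strict Implicit.
Unset Printing Implicit Defensive.

HB.instance Definition _ :=
  Monoid.isComLaw.Build R R0 Rplus (fun a b c => esym (Rplus_assoc a b c))
    Rplus_comm Rplus_0_l.

Lemma primes_iota M B : 0 < M -> M < B ->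
  primes M = [seq r <- index_iota 0 B | prime r && (r %| M)].
Proof.
move=> M_gt0 MB; apply: (irr_sorted_eq ltn_trans ltnn).
- exact: sorted_primes.
- by apply: sorted_filter; [exact: ltn_trans | exact: iota_ltn_sorted].
move=> r; rewrite mem_primes mem_filter mem_index_iota M_gt0 /=.
case: (prime r) => //=; case rM: (r %| M) => //=.
have := dvdn_leq M_gt0 rM; lia.
Qed.

Lemma ell_iota M B : 0 < M -> M < B ->
  ell M = \sum_(0 <= r < B | prime r) (if r %| M then r ^ logn r M else 0).
Proof.
move=> M_gt0 MB.
by rewrite /ell (primes_iota M_gt0 MB) big_filter big_mkcondr.
Qed.

Lemma ellM x y : 0 < x -> 0 < y -> coprime x y -> ell (x * y) = ell x + ell y.
Proof.
move=> x_gt0 y_gt0 cxy.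
have xy_gt0 : 0 < x * y by rewrite muln_gt0 x_gt0.
rewrite (ell_iota xy_gt0 (ltnSn _)) (@ell_iota x (x * y).+1) ?ltnS ?leq_pmulr //.
rewrite (@ell_iota y (x * y).+1) ?ltnS ?leq_pmull // -big_split /=.
apply: eq_bigr => r r_prime; rewrite Euclid_dvdM // lognM //.
case rx: (r %| x); case ry: (r %| y) => //=.
- have : r %| gcdn x y by rewrite dvdn_gcd rx ry.
  by rewrite (eqP cxy) dvdn1 => /eqP r1; rewrite r1 in r_prime.
- by rewrite (@logn_coprime r y) ?addn0 // prime_coprime ?ry.
- by rewrite (@logn_coprime r x) // prime_coprime ?rx.
Qed.

Lemma ell_prime_power p k : prime p -> 0 < k -> ell (p ^ k) = p ^ k.
Proof.
by move=> p_prime k_gt0; rewrite /ell primesX // primes_prime // big_seq1 pfactorK.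
Qed.

Lemma prime_of_primes M r : r \in primes M -> prime r.
Proof. by rewrite mem_primes => /andP[]. Qed.

Section Exchange.

Variables (n M q : nat).
Hypothesis gM : is_g n M.
Hypothesis q_prime : prime q.
Hypothesis primes_lt_q : forall r, r \in primes M -> r < q.

Lemma g_exchange r : r \in primes M -> 1 < logn r M ->
  r ^ (logn r M - 1) * (r - 1) < q.
Proof.
move=> rM k_gt1; rewrite ltnNge; apply/negP => q_le.
have [M_gt0 [ellM_le M_max]] := gM.
have r_prime := prime_of_primes rM.
have r_gt1 := prime_gt1 r_prime.
have r_lt_q := primes_lt_q rM.
have [m cop_rm defM] := pfactor_coprime r_prime M_gt0.
move: (logn r M) k_gt1 q_le defM => k k_gt1 q_le defM.
have m_gt0 : 0 < m by move: M_gt0; rewrite defM muln_gt0 => /andP[].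
have t_gt0 : 0 < r ^ (k - 1) by rewrite expn_gt0 ltnW.
have r_k : r ^ k = r ^ (k - 1) * r by rewrite -expnSr; congr (_ ^ _); lia.
have cop_qm : coprime q m.
  rewrite prime_coprime //; apply/negP => qm.
  have : q \in primes M by rewrite mem_primes q_prime M_gt0 defM dvdn_mulr.
  by move/primes_lt_q; rewrite ltnn.
have cop_qr : coprime q r by rewrite prime_coprime // gtnNdvd ?prime_gt0.
have ell_M : ell M = ell m + r ^ k.
  rewrite {1}defM ellM ?expn_gt0 ?(ltnW r_gt1) //; last first.
    by rewrite coprime_sym; apply: coprimeXl.
  by rewrite ell_prime_power // ltnW.
have ell_M' : ell (m * q * r ^ (k - 1)) = ell m + q + r ^ (k - 1).
  have mq_gt0 : 0 < m * q by rewrite muln_gt0 m_gt0 prime_gt0.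
  have cop_mq_t : coprime (m * q) (r ^ (k - 1)).
    by apply: coprimeXr; rewrite coprimeMl coprime_sym cop_rm cop_qr.
  rewrite (ellM mq_gt0 t_gt0 cop_mq_t).
  rewrite (ellM m_gt0 (prime_gt0 q_prime)) 1?coprime_sym //.
  rewrite ell_prime_power ?subn_gt0 //.
  by rewrite -{1}[q]expn1 ell_prime_power.
have : m * q * r ^ (k - 1) <= M.
  apply: M_max; first by rewrite !muln_gt0 m_gt0 prime_gt0.
  have : r ^ (k - 1) * (r - 1) + r ^ (k - 1) = r ^ k.
    by rewrite r_k mulnBr muln1 subnK // leq_pmulr // ltnW.
  lia.
rewrite defM r_k; move: (r ^ (k - 1)) t_gt0 => t t_gt0; nia.
Qed.

Lemma expn2_logn_le r : r \in primes M -> 2 ^ logn r M <= 2 * q.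
Proof.
move=> rM; have r_gt1 := prime_gt1 (prime_of_primes rM).
have q_gt0 := prime_gt0 q_prime.
have k_gt0 : 0 < logn r M by rewrite logn_gt0.
have [k_gt1 | k_le1] := ltnP 1 (logn r M); last first.
  have -> : logn r M = 1 by lia.
  by rewrite expn1 leq_pmulr.
have lt_q := g_exchange rM k_gt1.
move: (logn r M) k_gt1 lt_q => k k_gt1 lt_q.
have : 2 ^ (k - 1) <= r ^ (k - 1) by rewrite leq_exp2r ?subn_gt0.
have : r ^ (k - 1) <= r ^ (k - 1) * (r - 1) by rewrite leq_pmulr // subn_gt0.
have : 2 ^ k = 2 * 2 ^ (k - 1) by rewrite -expnS; congr (_ ^ _); lia.
lia.
Qed.

Lemma predn_expn_le r a : r \in primes M -> 1 < a <= logn r M ->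
  (r - 1) ^ a <= q.
Proof.
move=> rM /andP[a_gt1 a_le]; have r_gt1 := prime_gt1 (prime_of_primes rM).
have lt_q := g_exchange rM (leq_trans a_gt1 a_le).
move: (logn r M) a_le lt_q => k a_le lt_q.
have k_gt1 : 1 < k := leq_trans a_gt1 a_le.
have : (r - 1) ^ a <= (r - 1) ^ k by rewrite leq_pexp2l // subn_gt0.
have : (r - 1) ^ k = (r - 1) ^ (k - 1) * (r - 1).
  by rewrite -expnSr; congr (_ ^ _); lia.
have : (r - 1) ^ (k - 1) * (r - 1) <= r ^ (k - 1) * (r - 1).
  by rewrite leq_mul2r leq_exp2r ?leq_subr ?orbT ?subn_gt0.
lia.
Qed.

End Exchange.

Local Open Scope R_scope.

Lemma INR_expn x k : INR (x ^ k) = INR x ^ k.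
Proof. by elim: k => [|k IH] //; rewrite expnS mult_INR IH. Qed.

Lemma lt_up_nat k x : INR k <= x -> (k < Z.to_nat (up x))%N.
Proof.
move=> k_le; have [x_lt_up _] := archimed x.
have : (Z.of_nat k < up x)%Z by apply: lt_IZR; rewrite -INR_IZR_INZ; lra.
lia.
Qed.

Lemma ln_le x y : 0 < x -> x <= y -> ln x <= ln y.
Proof.
move=> x_gt0 [x_lt_y | <-]; last exact: Rle_refl.
exact/Rlt_le/ln_increasing.
Qed.

Lemma ln_INR_ge0 k : (0 < k)%N -> 0 <= ln (INR k).
Proof. by move=> k_gt0; rewrite -ln_1; apply: ln_le; [lra | exact/(le_INR 1)/leP]. Qed.

Lemma big_Rle (s : seq nat) (P : pred nat) (F G : nat -> R) :
  (forall i, i \in s -> P i -> F i <= G i) ->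
  \big[Rplus/0]_(i <- s | P i) F i <= \big[Rplus/0]_(i <- s | P i) G i.
Proof.
move=> le_FG; rewrite big_seq_cond [X in _ <= X]big_seq_cond.
apply: (big_ind2 Rle); [lra | by move=> *; lra | by move=> i /andP[]; apply: le_FG].
Qed.

Lemma big_Rge0 (s : seq nat) (P : pred nat) (F : nat -> R) :
  (forall i, P i -> 0 <= F i) -> 0 <= \big[Rplus/0]_(i <- s | P i) F i.
Proof. by move=> F_ge0; apply: (big_ind (Rle 0)); [lra | move=> *; lra |]. Qed.

Lemma sum_ln_le_theta (s : seq nat) x : uniq s ->
  (forall r, r \in s -> prime r /\ INR r <= x) ->
  \big[Rplus/0]_(r <- s) ln (INR r) <= theta x.
Proof.
move=> s_uniq s_le; rewrite /theta [X in _ <= X](bigID (fun p => p \in s)) /=.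
have -> : \big[Rplus/0]_(0 <= p < Z.to_nat (up x) | prime p && (p \in s))
            ln (INR p) = \big[Rplus/0]_(r <- s) ln (INR r).
  rewrite -big_filter; apply/perm_big/uniq_perm => //.
    exact/filter_uniq/iota_uniq.
  move=> r; rewrite mem_filter mem_index_iota.
  case rs: (r \in s); rewrite ?andbF //.
  by have [-> /lt_up_nat] := s_le r rs.
rewrite -[X in X <= _]Rplus_0_r; apply: Rplus_le_compat_l.
by apply: big_Rge0 => p /andP[/prime_gt0 p_gt0 _]; apply: ln_INR_ge0.
Qed.

Lemma ln_big_prod (s : seq nat) (h : nat -> nat) : (forall r, (0 < h r)%N) ->
  ln (INR (\prod_(r <- s) h r)) = \big[Rplus/0]_(r <- s) ln (INR (h r)).
Proof.
move=> h_gt0; elim: s => [|a s IH]; first by rewrite !big_nil ln_1.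
have prod_gt0 : (0 < \prod_(r <- s) h r)%N by apply: prodn_gt0.
by rewrite !big_cons -IH mult_INR ln_mult //; apply/lt_0_INR/ltP.
Qed.

Lemma ln_prime_decomp M : (0 < M)%N ->
  ln (INR M) = \big[Rplus/0]_(r <- primes M) (INR (logn r M) * ln (INR r)).
Proof.
move=> M_gt0; rewrite {1}(prod_prime_decomp M_gt0) prime_decompE big_map /=.
rewrite ln_big_prod; last by case=> [|r] //; rewrite expn_gt0.
rewrite big_seq [RHS]big_seq; apply: eq_bigr => r rM.
by rewrite INR_expn ln_pow //; apply/lt_0_INR/ltP/prime_gt0/(prime_of_primes rM).
Qed.

Lemma iter_Rplus k c : iter k (Rplus c) 0 = INR k * c.
Proof.
elim: k => [|k IH]; first by rewrite Rmult_0_l.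
by rewrite iterS IH S_INR; ring.
Qed.

Lemma big_nat_layer k A c : (0 < k < A)%N ->
  INR k * c = c + \big[Rplus/0]_(2 <= a < A) (if (a <= k)%N then c else 0).
Proof.
move=> /andP[k_gt0 k_lt_A].
rewrite (@big_cat_nat _ _ _ k.+1) //= [X in _ + (_ + X)]big1_seq; last first.
  by move=> a; rewrite mem_index_iota; case: ifP => //; lia.
rewrite (@eq_big_nat _ _ _ _ _ _ (fun => c)) => [|a]; last first.
  by rewrite ltnS => /andP[_ ->].
rewrite big_const_nat iter_Rplus.
have -> : INR k = INR (k.+1 - 2) + 1 by rewrite -S_INR; congr INR; lia.
lra.
Qed.

Lemma big_layers (s : seq nat) (k : nat -> nat) (w : nat -> R) A :
  (forall r, r \in s -> (0 < k r < A)%N) ->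
  \big[Rplus/0]_(r <- s) (INR (k r) * w r) =
  \big[Rplus/0]_(r <- s) w r +
  \big[Rplus/0]_(2 <= a < A) \big[Rplus/0]_(r <- s | (a <= k r)%N) w r.
Proof.
move=> k_bd; under [X in _ + X]eq_bigr do rewrite big_mkcond.
rewrite exchange_big -big_split; apply: eq_big_seq => r rs /=.
exact: big_nat_layer (k_bd r rs).
Qed.

Lemma INR_le_Rpower_inv_add1 r a q : (0 < a)%N -> (0 < r)%N ->
  ((r - 1) ^ a <= q)%N -> INR r <= Rpower (INR q) (/ INR a) + 1.
Proof.
move=> a_gt0 r_gt0 le_q.
have -> : INR r = INR (r - 1) + 1 by rewrite -S_INR; congr INR; lia.
apply: Rplus_le_compat_r.
have [r_eq1 | r_gt1] := leqP r 1.
  have -> : (r - 1 = 0)%N by lia.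
  by apply/Rlt_le/exp_pos.
have a_neq0 : INR a <> 0 by apply: not_0_INR; lia.
have base_gt0 : 0 < INR (r - 1) by apply/lt_0_INR/ltP; lia.
rewrite -[INR (r - 1)]Rpower_1 // -(Rinv_r (INR a)) // -Rpower_mult Rpower_pow //.
apply: Rle_Rpower_l; first by apply/Rlt_le/Rinv_0_lt_compat/lt_0_INR/ltP.
split; first exact: pow_lt.
by rewrite -INR_expn; apply/le_INR/leP.
Qed.

Lemma lt_up_log2 k q : (2 ^ k <= 2 * q)%N ->
  (k < Z.to_nat (up (ln (2 * INR q) / ln 2)))%N.
Proof.
move=> le_2q; apply: lt_up_nat.
have ln2_gt0 : 0 < ln 2 by rewrite -ln_1; apply: ln_increasing; lra.
have : ln (INR (2 ^ k)) <= ln (INR (2 * q)).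
  by apply: ln_le; [apply/lt_0_INR/ltP; rewrite expn_gt0 | apply/le_INR/leP].
have INR2 : INR 2 = 2 by rewrite /=; lra.
rewrite INR_expn mult_INR INR2 ln_pow; last lra.
move=> le_ln; apply: (Rmult_le_reg_r (ln 2)) => //.
by rewrite /Rdiv Rmult_assoc Rinv_l; lra.
Qed.

Lemma ln_g_le n M q : is_g n M -> prime q -> (Pmaxf M < q)%N ->
  ln (INR M) <= theta (INR (Pmaxf M)) + Ssum q.
Proof.
move=> gM q_prime P_lt_q; have [M_gt0 _] := gM.
have le_P r : r \in primes M -> (r <= Pmaxf M)%N by move=> rM; apply: max_pdiv_max.
have lt_q r : r \in primes M -> (r < q)%N.
  by move=> rM; apply: leq_ltn_trans (le_P r rM) P_lt_q.
rewrite ln_prime_decomp // (big_layers _ (A := Z.to_nat (up (ln (2 * INR q) / ln 2)))).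
  apply: Rplus_le_compat.
    apply: sum_ln_le_theta => [|r rM]; first exact: primes_uniq.
    by split; [exact: prime_of_primes rM | apply/le_INR/leP/le_P].
  apply: big_Rle => a; rewrite mem_index_iota => /andP[a_gt1 _] _.
  rewrite -big_filter; apply: sum_ln_le_theta => [|r].
    exact/filter_uniq/primes_uniq.
  rewrite mem_filter => /andP[a_le rM]; have r_prime := prime_of_primes rM.
  split => //; apply: INR_le_Rpower_inv_add1; [exact: ltnW | exact: prime_gt0 |].
  by apply: (predn_expn_le gM q_prime lt_q rM); rewrite a_gt1.
move=> r rM; rewrite logn_gt0 rM /=.
exact/lt_up_log2/(expn2_logn_le gM q_prime lt_q).
Qed.

Theorem mainTheorem17 (n M q : nat) :
  (2 <= n)%N -> is_g n M -> next_prime (Pmaxf M) q ->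
  Rle (ln (INR M)) (Rplus (theta (INR (Pmaxf M))) (Ssum q)).
Proof. by move=> _ gM [q_prime [P_lt_q _]]; apply: ln_g_le gM q_prime P_lt_q. Qed.
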